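(* Let $C\subseteq\mathbb{F}_q^n$ be a constant weight linear code. Let $C'$ be a subcode of $C$ and $c\in C$ a codeword. Then $c\in C'$ if and only if $\mathrm{Supp}(c)\subseteq\mathrm{Supp}(C')$.
   Context: A subcode is a linear subspace. For a subcode $D$, $\mathrm{Supp}(D)=\{x\in\{1,\dots,n\}: \exists d\in D,\ d_x\neq0\}$, and $\mathrm{Supp}(c)$ is the support of the subcode spanned by $c$. A constant weight code is a linear code all of whose non-zero codewords have the same number of non-zero coordinates. *)

From HB Require Import structures.
From mathcomp Require Import all_boot all_order all_algebra all_field.
Set Implicit Arguments. Unset Strict Implicit. Unset Printing Implicit Defensive.
Import GRing.Theory.
Local Open Scope ring_scope.

(* Codes of length n over a finite field F (= F_q) are subspaces of 'rV[F]_n. *)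

Definition wt (F : finFieldType) (n : nat) (v : 'rV[F]_n) : nat :=
  #|[set i : 'I_n | v 0 i != 0]|.

Definition supp (F : finFieldType) (n : nat) (D : {vspace 'rV[F]_n}) : {set 'I_n} :=
  [set x : 'I_n | [exists d : 'rV[F]_n, (d \in D) && (d 0 x != 0)]].

Definition suppv (F : finFieldType) (n : nat) (c : 'rV[F]_n) : {set 'I_n} :=
  supp <[c]>%VS.

Definition constant_weight (F : finFieldType) (n : nat) (C : {vspace 'rV[F]_n}) : Prop :=
  forall x y : 'rV[F]_n, x \in C -> y \in C -> x != 0 -> y != 0 -> wt x = wt y.

From HB Require Import structures.
From mathcomp Require Import all_boot all_order all_algebra all_field.
From mathcomp Require Import zify.
Import GRing.Theory.
Local Open Scope ring_scope.

(* Counting the pairs (d, i) with d in a subspace V and d_i <> 0 column by column gives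
   (sum_(d in V) wt d) * q = |Supp V| * |V| * (q - 1): every coordinate in Supp V is a
   linear form that is onto F, so it vanishes on exactly |V| / q vectors of V.  In a
   code of constant weight w the same sum is (|V| - 1) * w, and since x |-> (x - 1) / x is
   injective, |Supp V| determines |V| among subcodes.  If Supp c <= Supp C', then
   C' + <c> has the same support, hence the same size, as C', so it equals C' and c lies in C'. *)

Lemma predn_ratio_inj {a b k m : nat} : (0 < a)%N -> (0 < b)%N -> (0 < k)%N ->
  (a.-1 * k = a * m)%N -> (b.-1 * k = b * m)%N -> a = b.
Proof.
move=> a_gt0 b_gt0 k_gt0 ha hb.
have : (a.-1 * b * k = b.-1 * a * k)%N.
  by rewrite mulnAC ha [RHS]mulnAC hb mulnAC [RHS]mulnC mulnA.
by move/eqP; rewrite eqn_pmul2r // => /eqP; lia.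
Qed.

Section SupportCounting.
Variables (F : finFieldType) (n : nat).
Implicit Types (U V : {vspace 'rV[F]_n}) (d : 'rV[F]_n).

Lemma wtE d : wt d = (\sum_i (d 0%R i != 0%R))%N.
Proof.
by rewrite /wt -sum1_card big_mkcond; apply: eq_bigr => i _; rewrite inE; case: ifP.
Qed.

Lemma wt_eq0 d : (wt d == 0)%N = (d == 0).
Proof.
rewrite cards_eq0; apply/eqP/eqP => [d0 | ->]; last by apply/setP => i; rewrite !inE mxE eqxx.
apply/rowP => i; rewrite mxE; apply/eqP; apply: contraFT (in_set0 i) => di.
by rewrite -d0 inE.
Qed.

Lemma suppS U V : (U <= V)%VS -> supp U \subset supp V.
Proof.
move=> sUV; apply/subsetP => i; rewrite !inE => /existsP[d /andP[dU di]].
by apply/existsP; exists d; rewrite di (subvP sUV).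
Qed.

Lemma supp_addv U V : supp (U + V) = supp U :|: supp V.
Proof.
apply/eqP; rewrite eqEsubset subUset.
rewrite (suppS _ _ (addvSl U V)) (suppS _ _ (addvSr U V)) !andbT.
apply/subsetP => i; rewrite !inE => /existsP[_ /andP[/memv_addP[u uU [v vV ->]]]].
rewrite mxE; have [ui uvi | ui _] := eqVneq (u 0 i) 0.
  apply/orP; right; apply/existsP; exists v.
  by rewrite vV; move: uvi; rewrite ui add0r.
by apply/orP; left; apply/existsP; exists u; rewrite uU.
Qed.

Lemma card_coord_fiber V i a : i \in supp V ->
  #|[set d in V | d 0 i == a]| = #|[set d in V | d 0 i == 0]|.
Proof.
rewrite inE => /existsP[e /andP[eV ei]].
have [e1 e1V e1i] : exists2 e1, e1 \in V & e1 0 i = 1.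
  by exists ((e 0 i)^-1 *: e); rewrite ?memvZ // mxE mulVf.
have -> : [set d in V | d 0 i == a] =
          (fun d => d + a *: e1) @: [set d in V | d 0 i == 0].
  apply/setP=> d; apply/idP/imsetP => [|[x]]; rewrite !inE.
    case/andP=> dV /eqP di; exists (d - a *: e1); last by rewrite subrK.
    by rewrite inE rpredB ?memvZ //= !mxE e1i di mulr1 subrr.
  by case/andP=> xV /eqP xi ->; rewrite rpredD ?memvZ //= !mxE xi e1i mulr1 add0r.
by apply: card_imset => x y /addIr.
Qed.

Lemma card_coord_neq0 V i : i \in supp V ->
  (#|[set d in V | d 0%R i != 0%R]| * #|F| = #|V| * (#|F| - 1))%N.
Proof.
move=> iV.
have cardV : #|V| = (#|F| * #|[set d in V | d 0%R i == 0%R]|)%N.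
  rewrite -[LHS]sum1_card (partition_big (fun d => d 0 i) xpredT) //= -sum_nat_const.
  apply: eq_bigr => a _; rewrite -(card_coord_fiber _ _ a iV) -sum1_card.
  by apply: eq_bigl => d; rewrite inE.
have splitV : #|V| =
    (#|[set d in V | d 0%R i == 0%R]| + #|[set d in V | d 0%R i != 0%R]|)%N.
  rewrite -(cardID [pred d : 'rV[F]_n | d 0 i == 0] V).
  by congr (_ + _)%N; apply: eq_card => d; rewrite !inE // andbC.
by rewrite mulnBr muln1 {2}cardV [(#|F| * _)%N]mulnC -mulnBl splitV addKn.
Qed.

Lemma sum_wt_vspace V :
  ((\sum_(d in V) wt d) * #|F| = #|supp V| * #|V| * (#|F| - 1))%N.
Proof.
under eq_bigr do rewrite wtE.
rewrite exchange_big big_distrl /= (bigID (mem (supp V))) /= [X in (_ + X)%N]big1 ?addn0.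
  rewrite -mulnA -sum_nat_const; apply: eq_bigr => i iV.
  rewrite -(card_coord_neq0 _ _ iV) -sum1_card; congr (_ * _)%N.
  by rewrite big_mkcond [RHS]big_mkcond; apply: eq_bigr => d _; rewrite inE; case: (d \in V).
move=> i iV; rewrite big1 // => d dV; apply/eqP; rewrite eqb0 negbK.
by apply: contraNT iV => di; rewrite inE; apply/existsP; exists d; rewrite dV.
Qed.

End SupportCounting.

Section ConstantWeight.
Variables (F : finFieldType) (n : nat) (C : {vspace 'rV[F]_n}) (w : nat).
Hypothesis wt_C : forall d, d \in C -> d != 0 -> wt d = w.

Lemma sum_wt_subv V : (V <= C)%VS -> (\sum_(d in V) wt d = #|V|.-1 * w)%N.
Proof.
move=> sVC; rewrite (bigD1 0) ?mem0v //=.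
have /eqP -> : wt (0 : 'rV[F]_n) == 0%N by rewrite wt_eq0.
rewrite add0n (cardD1 0) mem0v -sum_nat_const.
apply: eq_big => [d | d /andP[d0 dV]]; first by rewrite !inE andbC.
by apply: wt_C; rewrite ?(subvP sVC).
Qed.

Hypothesis w_gt0 : (0 < w)%N.

Lemma card_subv_eq_supp U V :
  (U <= C)%VS -> (V <= C)%VS -> supp U = supp V -> #|U| = #|V|.
Proof.
have count (X : {vspace 'rV[F]_n}) : (X <= C)%VS ->
    (#|X|.-1 * (w * #|F|) = #|X| * (#|supp X| * (#|F| - 1)))%N.
  by move=> sXC; rewrite mulnA -(sum_wt_subv _ sXC) mulnCA mulnA -sum_wt_vspace.
have card_vspace_gt0 (X : {vspace 'rV[F]_n}) : (0 < #|X|)%N by rewrite (cardD1 0) mem0v.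
move=> sUC sVC suppUV.
apply: (predn_ratio_inj (card_vspace_gt0 U) (card_vspace_gt0 V) _ (count U sUC)).
  by rewrite muln_gt0 w_gt0 /=; apply/card_gt0P; exists 0.
by rewrite suppUV count.
Qed.

End ConstantWeight.

Arguments card_subv_eq_supp {F n C w} wt_C w_gt0 {U V}.

Theorem lemma2 (F : finFieldType) (n : nat) (C C' : {vspace 'rV[F]_n}) (c : 'rV[F]_n) :
  constant_weight C -> (C' <= C)%VS -> c \in C ->
  (c \in C') <-> (suppv c \subset supp C').
Proof.
move=> cwC sC'C cC; split=> [cC' | supp_c]; first by apply: suppS; rewrite -memvE.
have [-> | c0] := eqVneq c 0; first exact: mem0v.
pose D := (C' + <[c]>)%VS.
have sDC : (D <= C)%VS by rewrite subv_add sC'C -memvE.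
have suppD : supp D = supp C' by rewrite supp_addv; apply/setUidPl.
have wt_C d : d \in C -> d != 0 -> wt d = wt c by move=> dC d0; apply: cwC.
have wt_c_gt0 : (0 < wt c)%N by rewrite lt0n wt_eq0.
have cardD := card_subv_eq_supp wt_C wt_c_gt0 sC'C sDC (esym suppD).
have C'D : C' =i D by apply/(subset_cardP cardD)/subsetP; apply/subvP/addvSl.
by rewrite C'D (subvP (addvSr _ _)) ?memv_line.
Qed.
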